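(* Let $\mathcal{S} \subseteq 2^{\mathcal{T}_Y}$ be an algebraic closure system which is closed under time shifts. Then there is a theory $\Sigma$ such that $\mathcal{S} = \mathrm{Mod}(\Sigma)$.
   Context: $Y$ is a non-empty finite set of attributes and $\mathcal{T}_Y = \{y^i \mid y \in Y, i \in \mathbb{Z}\}$. For $M \subseteq \mathcal{T}_Y$ and $j \in \mathbb{Z}$, $M + j = \{y^{i+j} \mid y^i \in M\}$. A closure system on $\mathcal{T}_Y$ is a family closed under arbitrary intersections; it induces the closure operator $\mathrm{C}_\mathcal{S}(M) = \bigcap\{N \in \mathcal{S} \mid M \subseteq N\}$. It is algebraic if $\mathrm{C}_\mathcal{S}(M) = \bigcup\{\mathrm{C}_\mathcal{S}(B) \mid B \subseteq M, B \text{ finite}\}$ for all $M$. $\mathcal{S}$ is closed under time shifts if $M+i \in \mathcal{S}$ for all $M \in \mathcal{S}$, $i \in \mathbb{Z}$. A formula is $A \Rightarrow B$ with $A,B$ finite subsets of $\mathcal{T}_Y$; $M \models A \Rightarrow B$ means that for every $i \in \mathbb{Z}$, $A+i \subseteq M$ implies $B+i \subseteq M$. A theory is a set of formulas and $\mathrm{Mod}(\Sigma)$ is the set of all $M \subseteq \mathcal{T}_Y$ in which all formulas of $\Sigma$ are true. *)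

From Stdlib Require Import List ZArith.
Import ListNotations.
Open Scope Z_scope.

(* Time points y^i are pairs (y, i) : Y * Z; subsets of T_Y are predicates. *)
Definition tpoint (Y : Type) := (Y * Z)%type.
Definition tset (Y : Type) := tpoint Y -> Prop.

Definition finite_type (Y : Type) : Prop := exists l : list Y, forall y, In y l.

Definition subset {Y} (A B : tset Y) : Prop := forall p, A p -> B p.

Definition shift {Y} (M : tset Y) (j : Z) : tset Y :=
  fun p => M (fst p, snd p - j).

Definition fset_of {Y} (l : list (tpoint Y)) : tset Y := fun p => In p l.

Definition is_finite_subset {Y} (B : tset Y) : Prop :=
  exists l : list (tpoint Y), forall p, B p <-> In p l.

Definition big_inter {Y} (F : tset Y -> Prop) : tset Y :=
  fun p => forall N, F N -> N p.

Definition closure_system {Y} (S : tset Y -> Prop) : Prop :=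
  forall F : tset Y -> Prop, (forall N, F N -> S N) -> S (big_inter F).

Definition closure {Y} (S : tset Y -> Prop) (M : tset Y) : tset Y :=
  big_inter (fun N => S N /\ subset M N).

Definition algebraic {Y} (S : tset Y -> Prop) : Prop :=
  forall M : tset Y, forall p,
    closure S M p <->
    exists B : tset Y, subset B M /\ is_finite_subset B /\ closure S B p.

Definition shift_closed {Y} (S : tset Y -> Prop) : Prop :=
  forall M i, S M -> S (shift M i).

Record formula (Y : Type) := Formula { lhs : list (tpoint Y); rhs : list (tpoint Y) }.
Arguments Formula {Y}.
Arguments lhs {Y}.
Arguments rhs {Y}.

Definition models {Y} (M : tset Y) (f : formula Y) : Prop :=
  forall i : Z, subset (shift (fset_of (lhs f)) i) M ->
                subset (shift (fset_of (rhs f)) i) M.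

Definition Mod {Y} (Sigma : formula Y -> Prop) : tset Y -> Prop :=
  fun M => forall f, Sigma f -> models M f.

(* Take for Sigma the theory of S, i.e. all formulas true in every member of S.
   If M models it and p lies in the closure of M, algebraicity gives a finite
   A subset of M with p in the closure of A; the formula A => {p} belongs to
   the theory because each shift N + (-i) of a member N of S is again in S, so
   N contains B + i as soon as it contains A + i, for every B inside the
   closure of A.  Hence M contains its own closure, which lies in S. *)

From Pilot Require Import Defs.
From Stdlib Require Import List ZArith Lia FunctionalExtensionality PropExtensionality.
Import ListNotations.

Section ClosureSystem.

Variable Y : Type.
Variable S : tset Y -> Prop.

Definition theory : formula Y -> Prop :=
  fun f => forall N, S N -> models N f.

Lemma subset_closure (M : tset Y) : subset M (closure S M).
Proof. intros p Hp N [_ HMN]. exact (HMN p Hp). Qed.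

Lemma closure_min (M N : tset Y) : S N -> subset M N -> subset (closure S M) N.
Proof. intros HN HMN p Hp. exact (Hp N (conj HN HMN)). Qed.

Lemma closure_mono (A B : tset Y) : subset A B -> subset (closure S A) (closure S B).
Proof.
  intros HAB p Hp N [HN HBN]. apply Hp. split; [exact HN |].
  intros q Hq. exact (HBN q (HAB q Hq)).
Qed.

Lemma closure_in (M : tset Y) : closure_system S -> S (closure S M).
Proof. intros Hcs. apply Hcs. intros N [HN _]. exact HN. Qed.

Lemma closed_of_closure_sub (M : tset Y) :
  closure_system S -> subset (closure S M) M -> S M.
Proof.
  intros Hcs Hsub.
  replace M with (closure S M) by
    (apply functional_extensionality; intros p;
     apply propositional_extensionality;
     split; [apply Hsub | apply subset_closure]).
  exact (closure_in M Hcs).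
Qed.

Lemma models_closure_formula (l r : list (tpoint Y)) (N : tset Y) :
  shift_closed S -> S N ->
  subset (fset_of r) (closure S (fset_of l)) -> models N (Formula l r).
Proof.
  intros Hsh HN Hrl i Hli [y k] Hq; simpl in Hq.
  assert (HlN : subset (fset_of l) (Defs.shift N (- i))).
  { intros [y' k'] Hp. unfold Defs.shift; simpl.
    replace (k' - - i) with (k' + i) by lia.
    apply (Hli (y', k' + i)). unfold Defs.shift, fset_of; simpl.
    replace (k' + i - i) with k' by lia. exact Hp. }
  pose proof (closure_min _ _ (Hsh N (- i) HN) HlN _ (Hrl _ Hq)) as Hk.
  unfold Defs.shift in Hk; simpl in Hk.
  replace (k - i - - i) with k in Hk by lia. exact Hk.
Qed.

Lemma models_at_origin (M : tset Y) (f : formula Y) :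
  models M f -> subset (fset_of (lhs f)) M -> subset (fset_of (rhs f)) M.
Proof.
  intros Hf Hl [y k] Hp.
  apply (Hf 0%Z); unfold Defs.shift; simpl.
  - intros [y' k'] Hq. apply Hl. unfold fset_of in *; simpl in Hq.
    replace (k' - 0) with k' in Hq by lia. exact Hq.
  - replace (k - 0) with k by lia. exact Hp.
Qed.

Lemma closure_sub_of_models_theory (M : tset Y) :
  algebraic S -> shift_closed S -> Mod theory M -> subset (closure S M) M.
Proof.
  intros Halg Hsh HM p Hp.
  apply Halg in Hp as (B & HBM & (l & HBl) & HpB).
  assert (HlM : subset (fset_of l) M) by (intros q Hq; apply HBM, HBl, Hq).
  assert (Hpl : subset (fset_of [p]) (closure S (fset_of l))).
  { intros q [<- | []].
    apply (closure_mono B (fset_of l)); [intros q Hq; apply HBl, Hq | exact HpB]. }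
  assert (Hth : theory (Formula l [p])).
  { intros N HN. exact (models_closure_formula l [p] N Hsh HN Hpl). }
  apply (models_at_origin M (Formula l [p]) (HM _ Hth) HlM).
  left; reflexivity.
Qed.

End ClosureSystem.

Theorem theorem3 (Y : Type) (y0 : Y) (HY : finite_type Y)
  (S : tset Y -> Prop) (Hcs : closure_system S) (Halg : algebraic S)
  (Hsh : shift_closed S) :
  exists Sigma : formula Y -> Prop, forall M : tset Y, S M <-> Mod Sigma M.
Proof.
  exists (theory Y S). intros M; split.
  - intros HM f Hf. exact (Hf M HM).
  - intros HM. apply closed_of_closure_sub; [exact Hcs |].
    exact (closure_sub_of_models_theory Y S M Halg Hsh HM).
Qed.
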